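(* For all $k,n\ge1$, the group $\mathrm{Hei}_{2k+1}(\mathcal{O}/\mathfrak{p}^n)$ has a faithful complex representation of dimension $\sum_{i=0}^{\xi-1}f\,q^{k(n-i)}$, where $\xi=\min\{n,e\}$.
   Context: $F$ is a non-Archimedean local field with discrete valuation $\nu$, ring of integers $\mathcal{O}$, maximal ideal $\mathfrak{p}$, residue field of size $q=p^f$; $f$ is the absolute inertia degree and $e=\nu(p)$ the absolute ramification index ($e=\infty$ in characteristic $p$). For a commutative unital ring $R$, $\mathrm{Hei}_{2k+1}(R)$ is the group of matrices $\begin{pmatrix}1&\mathbf{x}&z\\0&I_k&\mathbf{y}^T\\0&0&1\end{pmatrix}$ with $\mathbf{x},\mathbf{y}\in R^k$, $z\in R$. *)

From HB Require Import structures.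
From mathcomp Require Import all_boot all_order all_algebra all_field.
Set Implicit Arguments. Unset Strict Implicit. Unset Printing Implicit Defensive.
Import Order.TTheory GRing.Theory Num.Theory.
Local Open Scope ring_scope.

Section LocalField.
Variables (F : fieldType) (v : F -> int).

Definition in_pow (m : int) (x : F) : bool := (x == 0) || (m <= v x).
Definition integral (x : F) : bool := in_pow 0 x.

(* F is a non-Archimedean local field with normalized discrete valuation v
   (v is only meaningful on nonzero elements; nu(0) = +oo is encoded by in_pow):
   v multiplicative, ultrametric, surjective onto Z (normalized), F complete
   w.r.t. v, and finite residue field O/p. *)
Definition is_nonarch_local_field : Prop :=
  [/\ (forall x y, x != 0 -> y != 0 -> v (x * y) = v x + v y),
      (forall x y, x != 0 -> y != 0 -> x + y != 0 ->
         Num.min (v x) (v y) <= v (x + y)),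
      (exists pi : F, pi != 0 /\ v pi = 1),
      (forall a : nat -> F,
         (forall N : int, exists M : nat, forall i j : nat,
            (M <= i)%N -> (M <= j)%N -> in_pow N (a i - a j)) ->
         exists L : F, forall N : int, exists M : nat, forall i : nat,
            (M <= i)%N -> in_pow N (a i - L))
    & (exists s : seq F, all integral s /\
         forall x, integral x -> exists2 y, y \in s & in_pow 1 (x - y))].

Definition residue_card (q : nat) : Prop :=
  exists s : seq F, [/\ size s = q, all integral s,
    (forall i j : nat, (i < q)%N -> (j < q)%N -> i != j ->
        ~~ in_pow 1 (nth 0 s i - nth 0 s j))
    & (forall x, integral x -> exists2 y, y \in s & in_pow 1 (x - y))].

(* xi = min(n, e) where e = nu(p) (e = +oo if p = 0 in F, i.e. char F = p). *)
Definition xi (p n : nat) : nat :=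
  if (p%:R : F) == 0 then n else minn n `|v p%:R|%N.

(* The Heisenberg matrix [[1, x, z], [0, I_k, y^T], [0, 0, 1]]. *)
Definition hei_mx (k : nat) (x y : 'rV[F]_k) (z : F) : 'M[F]_(1 + k + 1) :=
  col_mx (col_mx (row_mx (row_mx 1 x) z%:M)
                 (row_mx (row_mx 0 1%:M) y^T))
         (row_mx (row_mx 0 0) 1).

Definition in_HeiO (k : nat) (A : 'M[F]_(1 + k + 1)) : Prop :=
  exists (x y : 'rV[F]_k) (z : F),
    [/\ forall i, integral (x 0 i), forall i, integral (y 0 i), integral z
      & A = hei_mx x y z].

Definition congr_mod (m r : nat) (n : nat) (A B : 'M[F]_(m, r)) : Prop :=
  forall i j, in_pow n%:Z (A i j - B i j).

(* rho, restricted to Hei_{2k+1}(O), is a homomorphism into GL_d(C) whose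
   kernel is exactly the congruence subgroup mod p^n; equivalently rho induces
   a faithful d-dimensional complex representation of Hei_{2k+1}(O/p^n). *)
Definition faithful_rep_Hei_mod (k n d : nat)
    (rho : 'M[F]_(1 + k + 1) -> 'M[algC]_d) : Prop :=
  [/\ rho 1%:M = 1%:M,
      (forall A B, in_HeiO A -> in_HeiO B -> rho (A *m B) = rho A *m rho B)
    & (forall A B, in_HeiO A -> in_HeiO B ->
         (rho A = rho B <-> congr_mod n A B))].

End LocalField.
Arguments faithful_rep_Hei_mod {F} v k n {d} rho.

From HB Require Import structures.
From mathcomp Require Import all_boot all_order all_algebra all_field.
From mathcomp Require Import all_fingroup all_solvable all_character.
From mathcomp Require Import ring zify.
From Stdlib Require Import ClassicalEpsilon.
Import Order.TTheory GRing.Theory Num.Theory.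
Set Implicit Arguments. Unset Strict Implicit. Unset Printing Implicit Defensive.
Local Open Scope ring_scope.

(* For each level m <= n and each additive character psi of O/p^m, Hei(O) acts on
   functions on (O/p^m)^k through the Schroedinger-type model
   (x, y, z) : phi(u) |-> psi(z + u.y) phi(u + x), of dimension q^(km), trivially on
   the congruence subgroup mod p^n.  The group O/p^m is an abelian p-group whose layer
   p^(m-1)/p^m has order at most q = p^f, so some f characters of O/p^m have no common
   kernel on that layer.  The block sum over the levels m = n - i, i < xi, with these
   f characters each, has dimension at most sum_i f q^(k(n-i)); an identity block pads
   it to the exact dimension.  It is faithful mod p^n: the translation at level n
   recovers x mod p^n, and if w is not in p^n, choose r with b = p^r w not in p^n but
   p b in p^n.  As v(p) = e, b lies in p^(n-xi), so b has an exact level m in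
   (n - xi, n], where one of the chosen characters is nontrivial on b = p^r w, hence
   on w.  This detects y and z mod p^n. *)

Lemma in_pow0 (F : fieldType) (v : F -> int) m : in_pow v m 0.
Proof. by rewrite /in_pow eqxx. Qed.

Section SeparatingCharacters.
Local Open Scope group_scope.

Lemma abelian_pgroup_irr_separate (gT : finGroupType) (G K : {group gT}) (p t : nat) :
  prime p -> abelian G -> K \subset G -> p.-group K -> (logn p #|K| <= t)%N ->
  exists ch : nat -> Iirr G, forall x, x \in K ->
    (forall l, (l < t)%N -> 'chi_(ch l) x = 1%R) -> x = 1.
Proof.
move=> p_pr cGG; elim: t K => [|t IHt] K sKG pK.
  rewrite leqn0 => /eqP logK0; exists (fun _ => 0) => x Kx _.
  have /eqP K1 : K :==: 1 by rewrite trivg_card1 (card_pgroup pK) logK0.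
  by move: Kx; rewrite K1 inE => /eqP.
move=> logK; have [K1|ntK] := eqVneq K 1%G.
  by exists (fun _ => 0) => x; rewrite K1 inE => /eqP.
have [i nsKi] : exists i : Iirr G, ~~ (K \subset cfker 'chi_i).
  apply/existsP; apply: contraT; rewrite negb_exists => /forallP sKker.
  have : K \subset \bigcap_i cfker 'chi[G]_i.
    by apply/bigcapsP => i _; have := sKker i; rewrite negbK.
  by rewrite TI_cfker_irr => /trivgP K1; case/eqP: ntK; apply: val_inj.
set K' := (K :&: cfker 'chi_i)%G.
have pK' : p.-group K' := pgroupS (subsetIl _ _) pK.
have logK' : (logn p #|K'| <= t)%N.
  rewrite -ltnS (leq_trans _ logK) // -(ltn_exp2l _ _ (prime_gt1 p_pr)).
  rewrite -(card_pgroup pK) -(card_pgroup pK') proper_card //.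
  by rewrite properE subsetIl /= subsetI subxx.
have [ch chP] := IHt K' (subset_trans (subsetIl _ _) sKG) pK' logK'.
exists (fun l => if l is l'.+1 then ch l' else i) => x Kx chx1.
apply: chP => [|l lt_lt]; last exact: (chx1 l.+1).
rewrite in_setI Kx /= cfkerEirr inE.
have lin_i : 'chi[G]_i \is a linear_char by move/char_abelianP: cGG.
rewrite lin_char1 // (chx1 0%N) //.
Qed.

End SeparatingCharacters.

Section HeisenbergMatrices.
Variables (F : fieldType) (k : nat).
Local Notation hei := (@hei_mx F k).

Lemma hei_mx_mul x y z x' y' z' :
  hei x y z *m hei x' y' z' = hei (x + x') (y + y') (z + z' + (x *m y'^T) 0 0).
Proof.
rewrite /hei_mx !mul_col_mx !mul_row_col !mul_mx_row !mul0mx !mul1mx !mulmx0.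
rewrite !mulmx1 !add_row_mx !addr0 !add0r.
congr (col_mx (col_mx (row_mx (row_mx _ _) _) (row_mx _ _)) _).
- by rewrite addrC.
- by rewrite {1}[x *m _]mx11_scalar -!raddfD /= addrC addrA.
- by rewrite linearD /= addrC.
Qed.

Ltac split_ord i := rewrite -(splitK i); case: (split i) => {i} i /=.

Lemma hei_mx0 : hei 0 0 0 = 1%:M.
Proof.
apply/matrixP => i j; rewrite /hei_mx.
split_ord i; [split_ord i|]; split_ord j; try split_ord j;
  rewrite ?col_mxEu ?col_mxEd ?row_mxEl ?row_mxEr !mxE
    ?eq_lshift ?eq_rshift ?eq_lrshift ?eq_rlshift //.
all: by rewrite !ord1.
Qed.

Definition hei_row0 : 'I_(1 + k + 1) := lshift 1 (lshift k ord0).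
Definition hei_mid (j : 'I_k) : 'I_(1 + k + 1) := lshift 1 (rshift 1 j).
Definition hei_col_last : 'I_(1 + k + 1) := rshift (1 + k) ord0.

Definition hei_x (A : 'M[F]_(1 + k + 1)) : 'rV[F]_k := \row_j A hei_row0 (hei_mid j).
Definition hei_y (A : 'M[F]_(1 + k + 1)) : 'rV[F]_k := \row_j A (hei_mid j) hei_col_last.
Definition hei_z (A : 'M[F]_(1 + k + 1)) : F := A hei_row0 hei_col_last.

Lemma hei_xE x y z : hei_x (hei x y z) = x.
Proof.
apply/matrixP => i j; rewrite (ord1 i) mxE /hei_mx.
by rewrite col_mxEu col_mxEu row_mxEl row_mxEr.
Qed.

Lemma hei_yE x y z : hei_y (hei x y z) = y.
Proof.
apply/matrixP => i j; rewrite (ord1 i) mxE /hei_mx.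
by rewrite col_mxEu col_mxEd row_mxEr mxE.
Qed.

Lemma hei_zE x y z : hei_z (hei x y z) = z.
Proof. by rewrite /hei_z /hei_mx col_mxEu col_mxEu row_mxEr mxE eqxx mulr1n. Qed.

Lemma congr_mod_hei (v : F -> int) n x y z x' y' z' :
  congr_mod v n (hei x y z) (hei x' y' z') <->
  [/\ forall j, in_pow v n (x 0 j - x' 0 j), forall j, in_pow v n (y 0 j - y' 0 j)
    & in_pow v n (z - z')].
Proof.
split=> [cAB | [cx cy cz] i j].
  split=> [j|j|].
  - have := cAB hei_row0 (hei_mid j).
    by rewrite /hei_mx !col_mxEu !row_mxEl !row_mxEr.
  - have := cAB (hei_mid j) hei_col_last.
    by rewrite /hei_mx !col_mxEu !col_mxEd !row_mxEr !mxE.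
  - have := cAB hei_row0 hei_col_last.
    by rewrite /hei_mx !col_mxEu !row_mxEr !mxE eqxx !mulr1n.
rewrite /hei_mx; split_ord i; [split_ord i|]; split_ord j; try split_ord j;
  rewrite ?col_mxEu ?col_mxEd ?row_mxEl ?row_mxEr ?mxE ?subrr ?in_pow0 //.
- by rewrite (ord1 i).
- by rewrite (ord1 i) (ord1 j).
- by rewrite (ord1 j).
Qed.

End HeisenbergMatrices.

Section BlockRepresentations.
Variables (F : fieldType) (v : F -> int) (k n : nat).
Local Notation Mat := 'M[F]_(1 + k + 1).

Definition hei_rep_mod d (rho : Mat -> 'M[algC]_d) :=
  [/\ rho 1%:M = 1%:M,
      (forall A B, in_HeiO v A -> in_HeiO v B -> rho (A *m B) = rho A *m rho B)
    & (forall A B, in_HeiO v A -> in_HeiO v B -> congr_mod v n A B -> rho A = rho B)].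

Lemma hei_rep_mod1 d : hei_rep_mod (fun _ : Mat => (1%:M : 'M[algC]_d)).
Proof. by split=> // A B _ _; rewrite mulmx1. Qed.

Lemma hei_rep_mod_block d1 d2 (rho1 : Mat -> 'M[algC]_d1) (rho2 : Mat -> 'M[algC]_d2) :
  hei_rep_mod rho1 -> hei_rep_mod rho2 ->
  hei_rep_mod (fun A => block_mx (rho1 A) 0 0 (rho2 A)).
Proof.
case=> rho1_1 rho1M rho1_cong [rho2_1 rho2M rho2_cong]; split.
- by rewrite rho1_1 rho2_1 -scalar_mx_block.
- move=> A B hA hB; rewrite rho1M // rho2M // mulmx_block.
  by rewrite !mulmx0 !mul0mx !addr0 !add0r.
- by move=> A B hA hB cAB; rewrite (rho1_cong A B) // (rho2_cong A B).
Qed.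

Lemma hei_rep_mod_diag (T : eqType) (J : seq T) (dim : T -> nat)
    (rho : forall t, Mat -> 'M[algC]_(dim t)) :
  (forall t, hei_rep_mod (rho t)) ->
  exists sigma : Mat -> 'M[algC]_(\sum_(t <- J) dim t), hei_rep_mod sigma /\
    forall A B, sigma A = sigma B -> forall t, t \in J -> rho t A = rho t B.
Proof.
move=> rho_rep; elim: J => [|t J [sigma [sigma_rep sigma_sep]]].
  by rewrite big_nil; exists (fun _ => 1%:M); split=> [|A B _ t]; [apply: hei_rep_mod1|].
rewrite big_cons; exists (fun A => block_mx (rho t A) 0 0 (sigma A)).
split=> [|A B /eq_block_mx[eqAB _ _ /sigma_sep eqsigma] t']; first exact: hei_rep_mod_block.
by rewrite in_cons => /orP[/eqP->|]; last apply: eqsigma.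
Qed.

Lemma faithful_rep_pad d0 d (rho : Mat -> 'M[algC]_d0) : (d0 <= d)%N ->
  hei_rep_mod rho ->
  (forall A B, in_HeiO v A -> in_HeiO v B -> rho A = rho B -> congr_mod v n A B) ->
  exists rho' : Mat -> 'M[algC]_d, faithful_rep_Hei_mod v k n rho'.
Proof.
move=> le_d0d rho_rep rho_inj; rewrite -(subnKC le_d0d).
have [rho'_1 rho'M rho'_cong] := hei_rep_mod_block rho_rep (hei_rep_mod1 (d - d0)).
exists (fun A => block_mx (rho A) 0 0 1%:M); split=> // A B hA hB.
by split=> [/eq_block_mx[eqAB _ _ _] | ]; [apply: rho_inj | apply: rho'_cong].
Qed.

End BlockRepresentations.
Arguments hei_rep_mod {F} v k n {d} rho.

Section Valuation.
Variables (F : fieldType) (v : F -> int).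
Hypothesis vM : forall x y : F, x != 0 -> y != 0 -> v (x * y) = v x + v y.
Hypothesis vU : forall x y : F, x != 0 -> y != 0 -> x + y != 0 ->
  Num.min (v x) (v y) <= v (x + y).

Local Notation ip := (in_pow v).
Local Notation integ := (integral v).

Lemma valuation1 : v 1 = 0.
Proof.
have := vM (oner_neq0 F) (oner_neq0 F); rewrite mulr1 => /(congr1 (fun t => t - v 1)).
by rewrite subrr addrK.
Qed.

Lemma valuationN x : x != 0 -> v (- x) = v x.
Proof.
have N1_neq0 : (-1 : F) != 0 by rewrite oppr_eq0 oner_neq0.
have vN1 : v (-1) = 0.
  have /eqP := vM N1_neq0 N1_neq0; rewrite mulrNN mulr1 valuation1 eq_sym.
  by rewrite -mulr2n -mulr_natr mulf_eq0 => /orP[/eqP|].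
by move=> x_neq0; rewrite -mulN1r vM // vN1 add0r.
Qed.

Lemma in_powN m x : ip m (- x) = ip m x.
Proof. by rewrite /in_pow oppr_eq0; have [//|x_neq0] := eqVneq x 0; rewrite valuationN. Qed.

Lemma in_powD m x y : ip m x -> ip m y -> ip m (x + y).
Proof.
rewrite /in_pow; have [->|x0] := eqVneq x 0; first by rewrite add0r.
have [->|y0] := eqVneq y 0; first by rewrite addr0 (negPf x0).
have [//|xy0] := eqVneq (x + y) 0; rewrite /= => le_mx le_my.
by apply: le_trans (vU x0 y0 xy0); rewrite /Num.min; case: ifP.
Qed.

Lemma in_powB m x y : ip m x -> ip m y -> ip m (x - y).
Proof. by move=> mx my; rewrite in_powD ?in_powN. Qed.

Lemma in_powM a b x y : ip a x -> ip b y -> ip (a + b) (x * y).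
Proof.
rewrite /in_pow; have [->|x0] := eqVneq x 0; first by rewrite mul0r eqxx.
have [->|y0] := eqVneq y 0; first by rewrite mulr0 eqxx.
by rewrite mulf_eq0 (negPf x0) (negPf y0) /= vM //; apply: lerD.
Qed.

Lemma in_pow_le a b x : a <= b -> ip b x -> ip a x.
Proof. by rewrite /in_pow => le_ab /orP[->//|le_bv]; rewrite (le_trans le_ab le_bv) orbT. Qed.

Lemma in_pow_sum m (I : Type) (r : seq I) (P : pred I) (G : I -> F) :
  (forall i, P i -> ip m (G i)) -> ip m (\sum_(i <- r | P i) G i).
Proof.
move=> mG; elim/big_rec: _ => [|i x Pi mx]; first exact: in_pow0.
exact: in_powD (mG i Pi) mx.
Qed.

Lemma in_pow_subC m x y : ip m (x - y) = ip m (y - x).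
Proof. by rewrite -in_powN opprB. Qed.

Lemma in_pow_sub_trans m y x z : ip m (x - y) -> ip m (y - z) -> ip m (x - z).
Proof. by move=> mxy myz; have := in_powD mxy myz; rewrite addrA subrK. Qed.

Lemma in_pow_subKr m x y : ip m x -> ip m (x - y) -> ip m y.
Proof. by move=> mx mxy; have := in_powB mx mxy; rewrite opprB addrC subrK. Qed.

Lemma integral0 : integ 0.
Proof. exact: in_pow0. Qed.

Lemma integral1 : integ 1.
Proof. by rewrite /integral /in_pow valuation1 lexx orbT. Qed.

Lemma integralD x y : integ x -> integ y -> integ (x + y).
Proof. exact: in_powD. Qed.

Lemma integralN x : integ (- x) = integ x.
Proof. exact: in_powN. Qed.

Lemma integralM x y : integ x -> integ y -> integ (x * y).
Proof. by move=> ix iy; have := in_powM ix iy; rewrite addr0. Qed.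

Lemma integral_nat (c : nat) : integ c%:R.
Proof. by elim: c => [|c ic]; [apply: in_pow0 | rewrite mulrS integralD ?integral1]. Qed.

Lemma in_powX c (j : nat) : ip 1 c -> ip j (c ^+ j).
Proof.
move=> c1; elim: j => [|j IHj]; first by rewrite expr0; apply: integral1.
by rewrite exprS -addn1 PoszD addrC in_powM.
Qed.

Section CharacteristicPrime.
Variable p : nat.
Hypothesis p_in_p : ip 1 p%:R.

Lemma xi_gt0 n : (0 < n)%N -> (0 < xi v p n)%N.
Proof.
rewrite /xi; case: eqP => // /eqP p_neq0 n_gt0.
move: p_in_p; rewrite /in_pow (negbTE p_neq0) /= => vp_ge1.
by rewrite leq_min n_gt0 -ltz_nat gez0_abs // (le_trans _ vp_ge1).
Qed.

Lemma in_pow_xi (n : nat) b : integ b -> ip n (p%:R * b) -> ip (n - xi v p n)%N b.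
Proof.
move=> ib; rewrite /xi; case: eqP => [_|/eqP p_neq0]; first by rewrite subnn.
have [->|b0] := eqVneq b 0; first by rewrite in_pow0.
move: p_in_p ib; rewrite /integral /in_pow mulf_eq0 (negbTE p_neq0) (negbTE b0) /=.
rewrite vM // => vp_ge1 vb_ge0.
have <- : (`|v p%:R|%N)%:Z = v p%:R by rewrite gez0_abs // (le_trans _ vp_ge1).
rewrite /minn; case: ltnP => [_|le_e_n]; first by rewrite subnn.
by rewrite -subzn // lerBlDl.
Qed.

End CharacteristicPrime.

Section Uniformizer.
Variable pi : F.
Hypotheses (pi_neq0 : pi != 0) (v_pi : v pi = 1).

Lemma valuation_piX (j : nat) : v (pi ^+ j) = j.
Proof.
elim: j => [|j IHj]; first by rewrite expr0 valuation1.
by rewrite exprS vM ?expf_neq0 // v_pi IHj -PoszD add1n.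
Qed.

Lemma in_pow_pi : ip 1 pi.
Proof. by rewrite /in_pow v_pi orbT. Qed.

Lemma integral_pi : integ pi.
Proof. exact: in_pow_le in_pow_pi. Qed.

Lemma in_pow_piX (j : nat) : ip j (pi ^+ j).
Proof. by rewrite /in_pow valuation_piX lexx orbT. Qed.

Lemma in_pow_divX (m : int) (j : nat) x : ip (m + j) x -> ip m (x / pi ^+ j).
Proof.
rewrite /in_pow; have [->|x0] := eqVneq x 0; first by rewrite mul0r eqxx.
have pj0 : pi ^+ j != 0 by rewrite expf_neq0.
have : v (x / pi ^+ j * pi ^+ j) = v (x / pi ^+ j) + j.
  by rewrite vM ?mulf_neq0 ?invr_eq0 // valuation_piX.
by rewrite divfK // mulf_eq0 invr_eq0 (negPf x0) (negPf pj0) => -> /=; rewrite lerD2r.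
Qed.

Section Residues.
Variable S : seq F.
Hypothesis S_integral : all integ S.
Hypothesis S_cover : forall x, integ x -> exists2 y, y \in S & ip 1 (x - y).
Variables p f : nat.
Hypotheses (p_prime : prime p) (p_in_p : ip 1 p%:R) (size_S : size S = (p ^ f)%N).

Lemma size_residue_set_gt1 : (1 < size S)%N.
Proof.
have [y0 S_y0 y0_0] := S_cover integral0.
have [y1 S_y1 y1_1] := S_cover integral1.
have y01 : y0 != y1.
  apply: contraTneq (oner_neq0 F) => eq_y01; rewrite negbK.
  have : ip 1 (1 - 0) by apply: (in_pow_sub_trans y1_1); rewrite -eq_y01 in_pow_subC.
  by rewrite subr0 /in_pow valuation1 orbF.
have /(uniq_leq_size (s1 := [:: y0; y1])) : {subset [:: y0; y1] <= S}.
  by apply/allP; rewrite /= S_y0 S_y1.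
by apply; rewrite /= inE y01.
Qed.

Fixpoint digit_reps (m : nat) : seq F :=
  if m is m'.+1 then [seq s + pi * r | s <- S, r <- digit_reps m'] else [:: 0].

Lemma digit_reps_integral m : all integ (digit_reps m).
Proof.
elim: m => [|m IHm] /=; first by rewrite andbT; apply: in_pow0.
apply/allP => _ /allpairsP[[s r] [/= Ss rm ->]].
by apply: integralD (allP S_integral s Ss) (integralM integral_pi (allP IHm r rm)).
Qed.

Lemma size_digit_reps m : size (digit_reps m) = (size S ^ m)%N.
Proof. by elim: m => [|m IHm] //=; rewrite size_allpairs IHm expnS. Qed.

Lemma digit_reps_cover m x : integ x -> exists2 d, d \in digit_reps m & ip m (x - d).
Proof.
elim: m x => [|m IHm] x ix; first by exists 0; rewrite ?inE // subr0.
have [s Ss xs] := S_cover ix.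
have [|d md xsd] := IHm ((x - s) / pi); first by apply: (in_pow_divX (j := 1)).
exists (s + pi * d); first exact: allpairs_f.
have -> : x - (s + pi * d) = pi * ((x - s) / pi - d).
  by rewrite mulrBr mulrCA divff // mulr1 opprD addrA.
by rewrite -addn1 PoszD addrC in_powM ?in_pow_pi.
Qed.

Section Level.
Variable m : nat.
Local Notation reps := (digit_reps m).
Local Notation N := (size reps).

Definition rep_index (x : F) : nat := find (fun d => ip m (x - d)) reps.

Lemma rep_index_lt x : integ x -> (rep_index x < N)%N.
Proof.
move=> ix; have [d md xd] := digit_reps_cover m ix.
by rewrite -has_find; apply/hasP; exists d.
Qed.

Lemma rep_index_cong x y : ip m (x - y) -> rep_index x = rep_index y.
Proof.
move=> xy; apply: eq_find => d /=; apply/idP/idP => [xd | yd].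
  by apply: in_pow_sub_trans xd; rewrite in_pow_subC.
exact: in_pow_sub_trans xy yd.
Qed.

Lemma nth_rep_index x : integ x -> ip m (x - nth 0 reps (rep_index x)).
Proof.
move=> ix; apply: (nth_find 0 (a := fun d => ip m (x - d))).
by rewrite has_find rep_index_lt.
Qed.

(* O/p^m is realised as the set of indices of canonical representatives in [reps]. *)
Definition canonical_index (i : 'I_N.+1) := (i < N)%N && (rep_index (nth 0 reps i) == i).
Definition residue := {i : 'I_N.+1 | canonical_index i}.

Lemma canonical_rep_index x : integ x -> canonical_index (inord (rep_index x)).
Proof.
move=> ix; have lt_xN := rep_index_lt ix.
rewrite /canonical_index inordK ?lt_xN //=; last exact: ltnW.
by apply/eqP/rep_index_cong; rewrite in_pow_subC nth_rep_index.
Qed.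

Definition residue0 : residue := exist canonical_index _ (canonical_rep_index integral0).
Definition reduce (x : F) : residue := insubd residue0 (inord (rep_index x)).
Definition rep (a : residue) : F := nth 0 reps (val a).

Lemma rep_integral a : integ (rep a).
Proof.
rewrite /rep; case: a => i /= /andP[lt_iN _].
exact: (allP (digit_reps_integral m)) _ (mem_nth 0 lt_iN).
Qed.

Lemma val_reduce x : integ x -> val (val (reduce x)) = rep_index x.
Proof.
move=> ix; rewrite /reduce insubdK; last exact: canonical_rep_index.
by rewrite /= inordK // leqW // rep_index_lt.
Qed.

Lemma rep_reduce x : integ x -> ip m (x - rep (reduce x)).
Proof. by move=> ix; rewrite /rep val_reduce // nth_rep_index. Qed.

Lemma reduce_cong x y : ip m (x - y) -> reduce x = reduce y.
Proof. by move=> xy; rewrite /reduce (rep_index_cong xy). Qed.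

Lemma reduce_rep a : reduce (rep a) = a.
Proof.
apply/val_inj/val_inj; rewrite val_reduce ?rep_integral //.
by case: a => i ci; case/andP: (ci) => _ /eqP.
Qed.

Lemma reduce_eqP x y : integ x -> integ y -> reduce x = reduce y <-> ip m (x - y).
Proof.
move=> ix iy; split=> [eq_xy | /reduce_cong //].
apply: (in_pow_sub_trans (rep_reduce ix)); rewrite eq_xy in_pow_subC.
exact: rep_reduce.
Qed.

Lemma card_residue : (#|{: residue}| <= size S ^ m)%N.
Proof.
rewrite -size_digit_reps -[X in (_ <= X)%N]card_ord.
have val_inj' : injective (fun a : residue => Ordinal (proj1 (andP (valP a)))).
  by move=> a b /(congr1 val) /= /val_inj /val_inj.
exact: leq_card val_inj'.
Qed.

Lemma reduce_addl x y : integ x -> integ y -> reduce (rep (reduce x) + y) = reduce (x + y).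
Proof.
move=> ix iy; apply: reduce_cong.
by rewrite opprD addrACA subrr addr0 in_pow_subC rep_reduce.
Qed.

Lemma reduce_addr x y : integ x -> integ y -> reduce (y + rep (reduce x)) = reduce (y + x).
Proof. by move=> ix iy; rewrite addrC reduce_addl // addrC. Qed.

Definition res_add (a b : residue) : residue := reduce (rep a + rep b).

Lemma res_addC a b : res_add a b = res_add b a.
Proof. by rewrite /res_add addrC. Qed.

Lemma res_addA a b c : res_add a (res_add b c) = res_add (res_add a b) c.
Proof.
rewrite /res_add reduce_addr ?reduce_addl ?integralD ?rep_integral //.
by rewrite addrA.
Qed.

Lemma res_add0 a : res_add (reduce 0) a = a.
Proof. by rewrite /res_add reduce_addl ?integral0 ?rep_integral // add0r reduce_rep. Qed.

Lemma res_add_inj a : injective (res_add a).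
Proof.
move=> b c /reduce_eqP; rewrite !integralD ?rep_integral // opprD addrACA subrr add0r.
by move=> /(_ isT isT)/reduce_cong; rewrite !reduce_rep.
Qed.

Definition transl (a : residue) : {perm residue} := perm (@res_add_inj a).

Lemma translE a b : transl a b = res_add a b.
Proof. by rewrite permE. Qed.

Lemma translM a b : (transl a * transl b)%g = transl (res_add a b).
Proof. by apply/permP => c; rewrite permM !translE res_addA [res_add b a]res_addC. Qed.

Lemma transl0 : transl (reduce 0) = 1%g.
Proof. by apply/permP => c; rewrite translE perm1 res_add0. Qed.

Lemma transl_inj : injective transl.
Proof.
move=> a b /(congr1 (fun s : {perm residue} => s (reduce 0))).
by rewrite !translE ![res_add _ (reduce 0)]res_addC !res_add0.
Qed.

Lemma group_set_translations : group_set [set transl a | a : residue].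
Proof.
apply/group_setP; split; first by apply/imsetP; exists (reduce 0); rewrite ?transl0.
by move=> _ _ /imsetP[a _ ->] /imsetP[b _ ->]; rewrite translM imset_f.
Qed.

Definition res_group := Group group_set_translations.

Lemma transl_in_group a : transl a \in res_group.
Proof. exact: imset_f. Qed.

Lemma abelian_res_group : abelian res_group.
Proof.
apply/centsP => _ /imsetP[a _ ->] _ /imsetP[b _ ->].
by rewrite /commute !translM res_addC.
Qed.

(* res_group is O/p^m acting on itself by translations, so its irreducible characters
   are the additive characters of O/p^m. *)
Definition res_char (i : Iirr res_group) (x : F) : algC := 'chi_i (transl (reduce x)).

Lemma res_charD i x y : integ x -> integ y ->
  res_char i (x + y) = res_char i x * res_char i y.
Proof.
have lin_i : 'chi_i \is a linear_char by move/char_abelianP: abelian_res_group.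
move=> ix iy; rewrite /res_char -(lin_charM lin_i) ?transl_in_group // translM.
by rewrite /res_add reduce_addl ?reduce_addr ?rep_integral.
Qed.

Lemma res_char0 i : res_char i 0 = 1.
Proof.
have lin_i : 'chi_i \is a linear_char by move/char_abelianP: abelian_res_group.
by rewrite /res_char transl0 (lin_char1 lin_i).
Qed.

Lemma res_char_cong i x y : ip m (x - y) -> res_char i x = res_char i y.
Proof. by move=> xy; rewrite /res_char (reduce_cong xy). Qed.

Lemma res_char_neq0 i x : integ x -> res_char i x != 0.
Proof.
move=> ix; apply: contra_eqN (res_char0 i) => /eqP chi_x0.
by rewrite -(subrr x) res_charD ?integralN // chi_x0 mul0r eq_sym oner_eq0.
Qed.

Lemma res_char_mulrn i x N : integ x -> res_char i (x *+ N) = res_char i x ^+ N.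
Proof.
move=> ix; elim: N => [|N IHN]; first by rewrite mulr0n expr0 res_char0.
by rewrite mulrS res_charD ?IHN ?exprS // -mulr_natl integralM ?integral_nat.
Qed.

Lemma res_char_eq i x y : integ x -> integ y ->
  res_char i x = res_char i y -> res_char i (x - y) = 1.
Proof.
move=> ix iy eq_xy; apply: (mulIf (res_char_neq0 i iy)).
by rewrite -res_charD ?subrK ?mul1r // integralD ?integralN.
Qed.

Lemma translX a N : (transl a ^+ N)%g = transl (reduce (rep a *+ N)).
Proof.
elim: N => [|N IHN]; first by rewrite expg0 mulr0n transl0.
rewrite expgS IHN translM /res_add reduce_addr ?rep_integral //.
  by rewrite mulrS.
by rewrite -mulr_natl integralM ?rep_integral ?integral_nat.
Qed.

Lemma pgroup_res_group : pgroup p res_group.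
Proof.
apply/pgroupP => r r_prime r_dvd; have [x Gx ox] := Cauchy r_prime r_dvd.
case/imsetP: Gx => a _ x_a; rewrite {x}x_a in ox.
have : (transl a ^+ (p ^ m))%g = 1%g.
  rewrite translX -transl0; congr transl; apply: reduce_cong.
  rewrite subr0 -mulr_natl natrX -[m%:Z]addr0.
  exact: in_powM (in_powX _ p_in_p) (rep_integral a).
move/eqP; rewrite -order_dvdn ox Euclid_dvdX // dvdn_prime2 //.
by case/andP=> /eqP-> _; rewrite inE.
Qed.

Definition layer := [set transl a | a : residue & ip m.-1 (rep a)].

Lemma group_set_layer : group_set layer.
Proof.
have le_m1m : (m.-1)%:Z <= m%:Z by rewrite lez_nat leq_pred.
apply/group_setP; split.
  apply/imsetP; exists (reduce 0); rewrite ?transl0 // inE.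
  by apply: in_pow_le le_m1m _; rewrite -in_powN -sub0r rep_reduce ?integral0.
move=> _ _ /imsetP[a a_m1 ->] /imsetP[b b_m1 ->]; rewrite translM imset_f //.
rewrite !inE in a_m1 b_m1 *; apply: (in_pow_subKr (in_powD a_m1 b_m1)).
by apply: in_pow_le le_m1m _; rewrite rep_reduce ?integralD ?rep_integral.
Qed.

Definition layer_group := Group group_set_layer.

(* Every element of p^(m-1)/p^m is the residue of pi^(m-1) s for some s in S. *)
Lemma card_layer : (0 < m)%N -> (#|layer_group| <= p ^ f)%N.
Proof.
move=> m_gt0; rewrite -size_S.
pose g (j : 'I_(size S)) := transl (reduce (pi ^+ m.-1 * nth 0 S j)).
apply: (@leq_trans #|g @: 'I_(size S)|); last first.
  by rewrite -[X in (_ <= X)%N]card_ord leq_imset_card.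
apply: subset_leq_card; apply/subsetP => _ /imsetP[a a_m1 ->]; rewrite inE in a_m1.
have pi_m1 : pi ^+ m.-1 != 0 by rewrite expf_neq0.
have [|s Ss cs] := S_cover (x := rep a / pi ^+ m.-1).
  by apply: in_pow_divX; rewrite add0r.
have lt_sS : (index s S < size S)%N by rewrite index_mem.
apply/imsetP; exists (Ordinal lt_sS) => //.
rewrite /g /= nth_index // -[a in LHS]reduce_rep; congr transl; apply: reduce_cong.
have -> : rep a - pi ^+ m.-1 * s = pi ^+ m.-1 * (rep a / pi ^+ m.-1 - s).
  by rewrite mulrBr [pi ^+ _ * (_ / _)]mulrC divfK.
have -> : m%:Z = m.-1%:Z + 1 by rewrite -PoszD addn1 prednK.
exact: in_powM (in_pow_piX _) cs.
Qed.

Lemma layer_chars : exists ch : nat -> Iirr res_group,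
  forall x, integ x -> ip m.-1 x ->
    (forall l, (l < f)%N -> res_char (ch l) x = 1) -> ip m x.
Proof.
have [m0|m_gt0] := posnP m; first by exists (fun _ => 0) => x ix _ _; rewrite m0.
have sLG : layer_group \subset res_group.
  by apply/subsetP => _ /imsetP[a _ ->]; apply: transl_in_group.
have pL : pgroup p layer_group := pgroupS sLG pgroup_res_group.
have logL : (logn p #|layer_group| <= f)%N.
  by rewrite -(leq_exp2l _ _ (prime_gt1 p_prime)) -(card_pgroup pL) card_layer.
have [ch chP] := abelian_pgroup_irr_separate p_prime abelian_res_group sLG pL logL.
exists ch => x ix x_m1 chx1.
have x_ra : ip m (x - rep (reduce x)) := rep_reduce ix.
have /transl_inj : transl (reduce x) = transl (reduce 0).
  rewrite transl0; apply: chP => [|l lt_lf]; last by rewrite -(chx1 l lt_lf).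
  rewrite imset_f // inE (in_pow_subKr x_m1) //.
  by apply: in_pow_le x_ra; rewrite lez_nat leq_pred.
by move/reduce_eqP; rewrite subr0; apply; rewrite ?integral0.
Qed.
End Level.

Section HeisenbergLevel.
Variables (k m : nat) (i : Iirr (res_group m)).
Local Notation psi := (res_char i).

Definition integral_rv (x : 'rV[F]_k) := forall j, integ (x 0 j).

Definition hei_index := {ffun 'I_k -> residue m}.

Definition shift (u : hei_index) (x : 'rV[F]_k) : hei_index :=
  [ffun j => reduce m (rep (u j) + x 0 j)].

Definition phase (u : hei_index) (y : 'rV[F]_k) (z : F) : algC :=
  psi (z + \sum_j rep (u j) * y 0 j).

Definition level_mx (x y : 'rV[F]_k) (z : F) : 'M[algC]_#|{: hei_index}| :=
  \matrix_(a, b) (if enum_val b == shift (enum_val a) x then phase (enum_val a) y z else 0).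

Lemma integral_phase_arg (u : hei_index) y z : integral_rv y -> integ z ->
  integ (z + \sum_j rep (u j) * y 0 j).
Proof.
move=> iy iz; rewrite integralD //; apply: in_pow_sum => j _.
exact: integralM (rep_integral _) (iy j).
Qed.

Lemma shiftD u x x' : integral_rv x -> integral_rv x' ->
  shift (shift u x) x' = shift u (x + x').
Proof.
move=> ix ix'; apply/ffunP => j; rewrite !ffunE reduce_addl ?integralD ?rep_integral //.
by rewrite mxE addrA.
Qed.

Lemma phaseM u x y z y' z' : integral_rv x -> integral_rv y -> integ z ->
  integral_rv y' -> integ z' ->
  phase u y z * phase (shift u x) y' z' =
  phase u (y + y') (z + z' + \sum_j x 0 j * y' 0 j).
Proof.
move=> ix iy iz iy' iz'; rewrite /phase -res_charD ?integral_phase_arg //.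
apply: res_char_cong; set w := fun j => rep (shift u x j).
have sum_yy' : \sum_j rep (u j) * (y + y') 0 j =
    \sum_j rep (u j) * y 0 j + \sum_j rep (u j) * y' 0 j.
  by rewrite -big_split; apply: eq_bigr => j _; rewrite mxE mulrDr.
have sum_err : \sum_j (w j - (rep (u j) + x 0 j)) * y' 0 j =
    \sum_j w j * y' 0 j - \sum_j x 0 j * y' 0 j - \sum_j rep (u j) * y' 0 j.
  by rewrite -!sumrB; apply: eq_bigr => j _; ring.
have -> : z + \sum_j rep (u j) * y 0 j + (z' + \sum_j w j * y' 0 j)
    - (z + z' + \sum_j x 0 j * y' 0 j + \sum_j rep (u j) * (y + y') 0 j) =
    \sum_j (w j - (rep (u j) + x 0 j)) * y' 0 j.
  by rewrite sum_yy' sum_err; ring.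
apply: in_pow_sum => j _; rewrite -[m%:Z]addr0; apply: in_powM (iy' j).
by rewrite /w ffunE in_pow_subC rep_reduce // integralD ?rep_integral.
Qed.

Lemma level_mxM x y z x' y' z' : integral_rv x -> integral_rv y -> integ z ->
  integral_rv x' -> integral_rv y' -> integ z' ->
  level_mx x y z *m level_mx x' y' z' =
  level_mx (x + x') (y + y') (z + z' + \sum_j x 0 j * y' 0 j).
Proof.
move=> ix iy iz ix' iy' iz'; apply/matrixP => a b; rewrite !mxE.
set u := enum_val a; pose c0 := enum_rank (shift u x).
rewrite (bigD1 c0) //= big1 => [|c c_neq0]; last first.
  rewrite !mxE; case: eqP => [e|_]; last by rewrite mul0r.
  by case/eqP: c_neq0; rewrite /c0 -e enum_valK.
rewrite !mxE /c0 enum_rankK eqxx shiftD //.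
by case: eqP => _; rewrite ?mulr0 addr0 // phaseM.
Qed.

Lemma level_mx0 : level_mx 0 0 0 = 1%:M.
Proof.
apply/matrixP => a b; rewrite !mxE.
have -> : shift (enum_val a) 0 = enum_val a.
  by apply/ffunP => j; rewrite ffunE mxE addr0 reduce_rep.
rewrite (inj_eq enum_val_inj) eq_sym; case: eqP => _ //.
by rewrite /phase big1 ?addr0 ?res_char0 // => j _; rewrite mxE mulr0.
Qed.

Lemma level_mx_cong (x y : 'rV[F]_k) z (x' y' : 'rV[F]_k) z' : integral_rv y ->
  (forall j, ip m (x 0 j - x' 0 j)) -> (forall j, ip m (y 0 j - y' 0 j)) ->
  ip m (z - z') -> level_mx x y z = level_mx x' y' z'.
Proof.
move=> iy xx' yy' zz'; apply/matrixP => a b; rewrite !mxE.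
have -> : shift (enum_val a) x = shift (enum_val a) x'.
  apply/ffunP => j; rewrite !ffunE; apply: reduce_cong.
  by rewrite opprD addrACA subrr add0r.
case: eqP => // _; apply: res_char_cong.
rewrite opprD addrACA in_powD // -sumrB; apply: in_pow_sum => j _.
by rewrite -mulrBr -[m%:Z]add0r; apply: in_powM (rep_integral _) (yy' j).
Qed.

Lemma level_mx_data (x y : 'rV[F]_k) z (x' y' : 'rV[F]_k) z' :
  integral_rv y -> integ z -> level_mx x y z = level_mx x' y' z' ->
  forall u, shift u x = shift u x' /\ phase u y z = phase u y' z'.
Proof.
move=> iy iz e u.
have := congr1 (fun M : 'M_#|{: hei_index}| => M (enum_rank u) (enum_rank (shift u x))) e.
rewrite !mxE !enum_rankK eqxx; case: eqP => [-> -> // | _ phase0].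
have := res_char_neq0 i (integral_phase_arg u iy iz).
by rewrite -/(phase u y z) phase0 eqxx.
Qed.

Definition level_rep (A : 'M[F]_(1 + k + 1)) := level_mx (hei_x A) (hei_y A) (hei_z A).

Lemma mulmx_tr00 (x y : 'rV[F]_k) : (x *m y^T) 0 0 = \sum_j x 0 j * y 0 j.
Proof. by rewrite mxE; apply: eq_bigr => j _; rewrite mxE. Qed.

Lemma level_rep_mod n : (m <= n)%N -> hei_rep_mod v k n level_rep.
Proof.
move=> le_mn; split.
- by rewrite /level_rep -hei_mx0 hei_xE hei_yE hei_zE level_mx0.
- move=> A B [x [y [z [ix iy iz ->]]]] [x' [y' [z' [ix' iy' iz' ->]]]].
  by rewrite /level_rep hei_mx_mul !hei_xE !hei_yE !hei_zE mulmx_tr00 level_mxM.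
move=> A B [x [y [z [ix iy iz ->]]]] [x' [y' [z' [ix' iy' iz' ->]]]].
case/congr_mod_hei=> xx' yy' zz'; rewrite /level_rep !hei_xE !hei_yE !hei_zE.
have le_mn' : m%:Z <= n%:Z by rewrite lez_nat.
by apply: level_mx_cong => // [j|j|]; apply: in_pow_le le_mn' _.
Qed.

Lemma phase_approx (u : hei_index) (y : 'rV[F]_k) z (c : 'I_k -> F) :
  integral_rv y -> (forall j, ip m (rep (u j) - c j)) ->
  phase u y z = psi (z + \sum_j c j * y 0 j).
Proof.
move=> iy uc; apply: res_char_cong; rewrite opprD addrACA subrr add0r -sumrB.
by apply: in_pow_sum => j _; rewrite -mulrBl -[m%:Z]addr0; apply: in_powM (uc j) (iy j).
Qed.

Lemma level_rep_data (x y : 'rV[F]_k) z (x' y' : 'rV[F]_k) z' :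
  integral_rv x -> integral_rv y -> integ z ->
  integral_rv x' -> integral_rv y' -> integ z' ->
  level_rep (hei_mx x y z) = level_rep (hei_mx x' y' z') ->
  [/\ forall j, ip m (x 0 j - x' 0 j), psi (z - z') = 1
    & forall j, psi (y 0 j - y' 0 j) = 1].
Proof.
move=> ix iy iz ix' iy' iz'; rewrite /level_rep !hei_xE !hei_yE !hei_zE.
move/level_mx_data => /(_ iy iz) data.
have phase_eq (c : 'I_k -> F) : (forall j, integ (c j)) ->
    psi (z + \sum_j c j * y 0 j) = psi (z' + \sum_j c j * y' 0 j).
  move=> ic; pose u : hei_index := [ffun j => reduce m (c j)].
  have uc j : ip m (rep (u j) - c j) by rewrite ffunE in_pow_subC rep_reduce.
  by rewrite -(phase_approx z iy uc) -(phase_approx z' iy' uc); case: (data u).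
have psi_z : psi z = psi z'.
  have := phase_eq (fun=> 0) (fun=> integral0).
  by rewrite !big1 ?addr0 // => j; rewrite mul0r.
split=> [j | | l].
- have [shift_eq _] := data [ffun=> reduce m 0].
  move/ffunP/(_ j): shift_eq; rewrite !ffunE !reduce_addl ?integral0 // !add0r.
  by move/reduce_eqP; apply.
- exact: res_char_eq iz iz' psi_z.
- pose c (j : 'I_k) : F := (j == l)%:R.
  have sum_c (w : 'rV[F]_k) : \sum_j c j * w 0 j = w 0 l.
    rewrite (bigD1 l) //= big1 ?addr0 => [|j /negPf l_j]; first by rewrite /c eqxx mul1r.
    by rewrite /c l_j mul0r.
  have := phase_eq c (fun j => integral_nat _).
  rewrite !sum_c (res_charD _ iz (iy l)) (res_charD _ iz' (iy' l)) psi_z.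
  by move/(mulfI (res_char_neq0 i iz'))/(res_char_eq (iy l) (iy' l)).
Qed.

End HeisenbergLevel.

Lemma card_hei_index k m : (#|{: hei_index k m}| <= size S ^ (k * m))%N.
Proof.
rewrite card_ffun card_ord mulnC expnM.
by case: k => [|k]; rewrite // leq_exp2r //; apply: card_residue.
Qed.

Definition layer_char (m : nat) : nat -> Iirr (res_group m) :=
  proj1_sig (constructive_indefinite_description _ (layer_chars m)).

Lemma layer_charP m x : integ x -> ip m.-1 x ->
  (forall l, (l < f)%N -> res_char (layer_char m l) x = 1) -> ip m x.
Proof. by rewrite /layer_char; case: constructive_indefinite_description => ch /=; apply. Qed.

Lemma pX_mul_threshold (n : nat) w : integ w -> ~~ ip n w ->
  exists r, ~~ ip n (p%:R ^+ r * w) /\ ip n (p%:R ^+ r.+1 * w).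
Proof.
move=> iw nw; have pnw : exists r, ip n (p%:R ^+ r * w).
  by exists n; rewrite -[n%:Z]addr0; apply: in_powM (in_powX _ p_in_p) iw.
case: (ex_minnP pnw) => -[|r] pr min_r; first by rewrite expr0 mul1r (negPf nw) in pr.
by exists r; split=> //; apply/negP => /min_r; rewrite ltnn.
Qed.

Lemma in_pow_exact_level (n : nat) b : integ b -> ~~ ip n b ->
  exists m, [/\ (m <= n)%N, ip m.-1 b & ~~ ip m b].
Proof.
move=> ib nb; have ex_nb : exists j : nat, ~~ ip j b by exists n.
case: (ex_minnP ex_nb) => m nb_m min_m; exists m; split=> //; first exact: min_m.
apply/negPn/negP => /min_m; case: m nb_m {min_m} => [nb0 _ | m _ /=].
  by case/negP: nb0.
by rewrite ltnn.
Qed.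

Section Assembly.
Variable n : nat.
Local Notation X := (xi v p n).

Lemma layer_chars_kernel w : integ w ->
  (forall m, (n - X < m <= n)%N -> forall l, (l < f)%N -> res_char (layer_char m l) w = 1) ->
  ip n w.
Proof.
move=> iw chw1; apply/contraT => nw.
have [r [nb pb]] := pX_mul_threshold iw nw; set b := p%:R ^+ r * w in nb pb.
have ib : integ b by rewrite integralM // -natrX integral_nat.
have b_xi : ip (n - X)%N b by apply: in_pow_xi; rewrite // mulrA -exprS.
have [m [le_mn b_m1 nb_m]] := in_pow_exact_level ib nb.
have lt_m : (n - X < m)%N.
  by rewrite ltnNge; apply: contra nb_m => le_m; apply: in_pow_le b_xi; rewrite lez_nat.
case/negP: nb_m; apply: (layer_charP (m := m) ib b_m1) => l lt_lf.
by rewrite /b -natrX mulr_natl res_char_mulrn // chw1 ?expr1n // lt_m le_mn.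
Qed.

Lemma hei_faithful_rep k : (0 < n)%N -> (0 < f)%N ->
  exists rho : 'M[F]_(1 + k + 1) ->
               'M[algC]_(\sum_(i < X) f * size S ^ (k * (n - i))),
    faithful_rep_Hei_mod v k n rho.
Proof.
move=> n_gt0 f_gt0.
pose J := [seq (a, l) | a <- index_iota 0 X, l <- index_iota 0 f].
have [sigma [sigma_rep sigma_sep]] :=
  hei_rep_mod_diag J (fun t => level_rep_mod k (layer_char (n - t.1) t.2) (leq_subr t.1 n)).
apply: faithful_rep_pad sigma_rep _.
  rewrite big_allpairs -(big_mkord xpredT (fun i => f * size S ^ (k * (n - i))))%N.
  apply: leq_sum => a _; rewrite -[X in (_ <= X * _)%N]subn0 -sum_nat_const_nat.
  by apply: leq_sum => l _; apply: card_hei_index.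
move=> _ _ [x [y [z [ix iy iz ->]]]] [x' [y' [z' [ix' iy' iz' ->]]]] /sigma_sep eq_rho.
have inJ a l : (a < X)%N -> (l < f)%N -> (a, l) \in J.
  by move=> lt_aX lt_lf; apply: allpairs_f; rewrite mem_index_iota.
have data a l : (a < X)%N -> (l < f)%N -> _ :=
  fun lt_aX lt_lf => level_rep_data ix iy iz ix' iy' iz' (eq_rho _ (inJ a l lt_aX lt_lf)).
have kernel w : integ w ->
    (forall a l, (a < X)%N -> (l < f)%N -> res_char (layer_char (n - a) l) w = 1) -> ip n w.
  move=> iw chw1; apply: (layer_chars_kernel iw) => m /andP[lt_m le_mn] l lt_lf.
  by rewrite -(subKn le_mn) chw1 //; lia.
apply/congr_mod_hei; split=> [j | j |].
- by have [xx' _ _] := data 0%N 0%N (xi_gt0 p_in_p n_gt0) f_gt0; rewrite subn0 in xx'.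
- apply: kernel => [|a l lt_aX lt_lf]; first by rewrite integralD ?integralN.
  by have [_ _ ->] := data a l lt_aX lt_lf.
- apply: kernel => [|a l lt_aX lt_lf]; first by rewrite integralD ?integralN.
  by have [_ -> _] := data a l lt_aX lt_lf.
Qed.

End Assembly.
End Residues.
End Uniformizer.
End Valuation.

Theorem lemma4p7 (F : fieldType) (v : F -> int) (p f q : nat) :
  is_nonarch_local_field v ->
  prime p -> in_pow v 1 (p%:R : F) ->
  residue_card v q -> q = (p ^ f)%N ->
  forall k n : nat, (1 <= k)%N -> (1 <= n)%N ->
  exists rho : 'M[F]_(1 + k + 1) ->
               'M[algC]_(\sum_(i < xi v p n) f * q ^ (k * (n - i)))%N,
    faithful_rep_Hei_mod v k n rho.
Proof.
move=> [vM vU [pi [pi_neq0 v_pi]] _ _] p_prime p_in_p [S [size_S S_int _ S_cover]] q_pf.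
move=> k n _ n_gt0; rewrite -size_S.
have size_S_pf : size S = (p ^ f)%N by rewrite size_S.
have f_gt0 : (0 < f)%N.
  rewrite -(ltn_exp2l _ _ (prime_gt1 p_prime)) expn0 -size_S_pf.
  by have := size_residue_set_gt1 vM vU S_cover.
by have := hei_faithful_rep vM vU pi_neq0 v_pi S_int S_cover p_prime p_in_p size_S_pf k n_gt0 f_gt0.
Qed.
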